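(* Let $0<x_L<\mu<x_H<1$ and let $F$ be the distribution over posteriors supported on $\{x_L,x_H\}$ with mean $\mu$. Define $$\eta_1(x_H)=-\mu c'(\mu)-c(x_H)+c'(x_H)x_H,\qquad \eta_2(x_L)=(1-\mu)c'(\mu)-c(x_L)-(1-x_L)c'(x_L),$$ and $\eta(x_L,x_H)=\max\{\eta_1(x_H),\eta_2(x_L)\}$. Then the principal can implement $F$ efficiently if and only if $v_0/\kappa\ge\eta(x_L,x_H)$.
   Context: There are two states $\Theta=\{\theta_1,\theta_2\}$; a belief is identified with $x\in[0,1]$, the probability of $\theta_2$; the prior is $\mu\in(0,1)$. Bayes-plausible distributions over posteriors are probability measures on $[0,1]$ with mean $\mu$. Acquiring $F$ costs the agent $\kappa\int c\,dF$, where $\kappa>0$ and $c:[0,1]\to\mathbb{R}_+$ is strictly convex, twice continuously differentiable, bounded on $(0,1)$, with $c(\mu)=0$. The agent is risk neutral and protected by limited liability: a contract $(M,t)$ is a compact message set $M$ and a transfer $t:M\times\Theta\to\mathbb{R}_+$ paid in money. The agent has outside option $v_0\ge0$. Timing: the principal offers $(M,t)$; the agent rejects (getting $v_0$) or accepts, chooses any Bayes-plausible $G$ paying $\kappa\int c\,dG$, privately observes a posterior $x\sim G$, then walks away (getting $v_0$) or sends $d\in M$ and receives $t(d,\theta)$ in realized state $\theta$. For $d\in M$, $N(x\mid d)=(1-x)t(d,\theta_1)+x\,t(d,\theta_2)-\kappa c(x)$. $(M,t)$ implements $F$ if $M=\operatorname{supp}(F)$ and ''accept, acquire $F$, send the realized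 posterior as message'' is optimal among all agent strategies (rejecting; or accepting, acquiring any $G$, and at each posterior sending any possibly randomized message or walking away). The principal's cost is the expected transfer. $F$ is implemented efficiently if it is implemented at expected transfer equal to the first-best cost $\kappa\int c\,dF+v_0$. *)

From HB Require Import structures.
From mathcomp Require Import all_boot all_order all_algebra.
From mathcomp Require Import all_classical all_reals all_analysis.
Set Implicit Arguments. Unset Strict Implicit. Unset Printing Implicit Defensive.
Import Order.TTheory GRing.Theory Num.Theory.
Import numFieldNormedType.Exports.
Local Open Scope classical_set_scope.
Local Open Scope ring_scope.

Inductive state := th1 | th2.

Section Model.
Variable R : realType.

Definition unit_itv : set R := [set x | 0 <= x <= 1].

(* Standing assumptions on the cost function c : [0,1] -> R_+ (only its values
   on [0,1] matter; it is given as a total function on R). *)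
Definition cost_assumptions (c : R -> R) (mu : R) : Prop :=
  (forall x, 0 <= x <= 1 -> 0 <= c x) /\
  (forall x y l, 0 <= x <= 1 -> 0 <= y <= 1 -> x != y -> 0 < l < 1 ->
      c (l * x + (1 - l) * y) < l * c x + (1 - l) * c y) /\
  (forall x, 0 < x < 1 ->
      derivable c x 1 /\ derivable (derive1 c) x 1 /\ {for x, continuous (derive1n 2 c)}) /\
  (exists B : R, forall x, 0 < x < 1 -> c x <= B) /\
  c mu = 0.

(* Bayes-plausible distributions over posteriors: probability measures on
   [0,1] (here: on R, giving full mass to [0,1]) with mean mu. *)
Definition bayes_plausible (G : probability R R) (mu : R) : Prop :=
  G unit_itv = 1%E /\ (\int[G]_(x in unit_itv) x%:E = mu%:E)%E.

(* Expected transfer for message d at posterior x (the transfer part of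
   N(x | d)). *)
Definition exp_transfer (t : R -> state -> R) (d x : R) : R :=
  (1 - x) * t d th1 + x * t d th2.

(* Weights of the two-point distribution F on {xL, xH} with mean mu. *)
Definition wL (xL xH mu : R) : R := (xH - mu) / (xH - xL).
Definition wH (xL xH mu : R) : R := (mu - xL) / (xH - xL).

(* A (behavioural, possibly randomized) reporting strategy with message set
   M = {xL, xH}: at posterior x, walk away with probability pW x, send xL with
   probability pL x, send xH with probability pH x. *)
Definition strategy (pW pL pH : R -> R) : Prop :=
  measurable_fun unit_itv pW /\ measurable_fun unit_itv pL /\
  measurable_fun unit_itv pH /\
  (forall x, 0 <= x <= 1 ->
     [/\ 0 <= pW x, 0 <= pL x, 0 <= pH x & pW x + pL x + pH x = 1]).

Definition dev_payoff (c : R -> R) (kappa v0 xL xH : R) (t : R -> state -> R)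
    (G : probability R R) (pW pL pH : R -> R) : \bar R :=
  (\int[G]_(x in unit_itv)
      (pW x * v0 + pL x * exp_transfer t xL x + pH x * exp_transfer t xH x)%:E
   - kappa%:E * \int[G]_(x in unit_itv) (c x)%:E)%E.

Definition truthful_payoff (c : R -> R) (kappa xL xH mu : R)
    (t : R -> state -> R) : R :=
  wL xL xH mu * (exp_transfer t xL xL - kappa * c xL) +
  wH xL xH mu * (exp_transfer t xH xH - kappa * c xH).

Definition principal_cost (xL xH mu : R) (t : R -> state -> R) : R :=
  wL xL xH mu * exp_transfer t xL xL + wH xL xH mu * exp_transfer t xH xH.

Definition first_best (c : R -> R) (kappa v0 xL xH mu : R) : R :=
  kappa * (wL xL xH mu * c xL + wH xL xH mu * c xH) + v0.

(* The contract (M, t) with M = supp F = {xL, xH} and limited-liability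
   transfers t : M x Theta -> R_+ implements F. *)
Definition implements (c : R -> R) (kappa v0 xL xH mu : R)
    (t : R -> state -> R) : Prop :=
  (forall d s, (d = xL \/ d = xH) -> 0 <= t d s) /\
  v0 <= truthful_payoff c kappa xL xH mu t /\
  (forall (G : probability R R) pW pL pH,
     bayes_plausible G mu -> strategy pW pL pH ->
     (dev_payoff c kappa v0 xL xH t G pW pL pH
        <= (truthful_payoff c kappa xL xH mu t)%:E)%E).

Definition implements_efficiently (c : R -> R) (kappa v0 xL xH mu : R) : Prop :=
  exists t : R -> state -> R,
    implements c kappa v0 xL xH mu t /\
    principal_cost xL xH mu t = first_best c kappa v0 xL xH mu.

Definition eta1 (c : R -> R) (mu xH : R) : R :=
  - mu * derive1 c mu - c xH + derive1 c xH * xH.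
Definition eta2 (c : R -> R) (mu xL : R) : R :=
  (1 - mu) * derive1 c mu - c xL - (1 - xL) * derive1 c xL.
Definition eta_max (c : R -> R) (mu xL xH : R) : R :=
  Num.max (eta1 c mu xH) (eta2 c mu xL).

End Model.

(* Write T_u for the tangent line of c at u and consider the contract paying
   v0 + kappa (T_d x - T_mu x) for report d at posterior x.  Since a convex c
   lies above each of its tangent lines, no acquisition plan and reporting rule
   earns more than v0 + kappa (c x - T_mu x) at posterior x, and the
   mean-mu constraint integrates T_mu to c mu = 0: the agent gets at most v0,
   which truthful reporting attains at the first-best cost.

   Conversely, at the first-best cost the truthful utilities lie on a line
   through (mu, v0), and every deviation to a two-point distribution with mean
   mu must stay below that line.  Deviations that walk away or report xL or
   xH touch the line at mu, xL and xH, and a line touching kappa c from below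
   at an interior point is its tangent, so every efficient contract is the
   one above.  Its transfers are nonnegative iff the two extreme ones,
   v0 - kappa eta1 (report xH, state theta_1) and v0 - kappa eta2 (report xL,
   state theta_2), are: by convexity they bound the other two from below. *)

From HB Require Import structures.
From mathcomp Require Import all_boot all_order all_algebra.
From mathcomp Require Import all_classical all_reals all_analysis.
From mathcomp Require Import ring lra measurable_realfun.
Import Order.TTheory GRing.Theory Num.Theory.
Import numFieldNormedType.Exports.
Local Open Scope classical_set_scope.
Local Open Scope ring_scope.

Section convex_tangent.
Context {R : realType}.
Implicit Types (S : set R) (f : R -> R) (a x l : R).

Definition convex_on S f := forall x y l, S x -> S y -> 0 < l < 1 ->
  f (l * x + (1 - l) * y) <= l * f x + (1 - l) * f y.

Definition tangent_line f a x := f a + derive1 f a * (x - a).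

Lemma convex_on_chord {S f a x} l : convex_on S f -> S a -> S x -> 0 < l <= 1 ->
  f (a + l * (x - a)) - f a <= l * (f x - f a).
Proof.
move=> cvx Sa Sx /andP[l0]; rewrite le_eqVlt => /orP[/eqP->|l1].
  by rewrite !mul1r (addrC a) subrK.
have := cvx x a l Sx Sa; rewrite l0 l1 => /(_ isT).
have -> : l * x + (1 - l) * a = a + l * (x - a) by ring.
lra.
Qed.

Lemma convex_tangent_line_le {S f a x} : convex_on S f -> S a -> S x ->
  derivable f a 1 -> tangent_line f a x <= f x.
Proof.
move=> cvx Sa Sx /derivable1_diffP dfa.
have dfv : derivable f a (x - a) by exact: diff_derivable.
suff : 'D_(x - a) f a <= f x - f a.
  by rewrite deriveE // diff1E // /tangent_line [_ *: _]mulrC; lra.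
rewrite ['D_(x - a) f a]cvg_at_rightE //; apply: limr_le.
  rewrite -(cvg_at_rightE (fun h : R => h^-1 *: ((f \o shift a) _ - f a))) //.
  apply: cvg_trans dfv; apply: cvg_app.
  move=> A [e e0 eA]; exists e => // h he h0; apply: eA => //.
  exact/lt0r_neq0.
near=> h.
have h0 : 0 < h by near: h; exists 1 => /=.
have h1 : h <= 1.
  near: h; exists 1 => //= h; rewrite /= distrC subr0 => + _.
  by move=> /(le_lt_trans (ler_norm _)) /ltW.
have := convex_on_chord h cvx Sa Sx; rewrite h0 h1 => /(_ isT).
by rewrite -[_ *: _]/(h^-1 * _) ler_pdivrMl //= (addrC _ a).
Unshelve. all: by end_near.
Qed.

Lemma supporting_line_slope {f k s a b x0} : a < x0 < b ->
  (forall y, a < y < b -> derivable f y 1) ->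
  (forall y, a < y < b -> k * f x0 + s * (y - x0) <= k * f y) ->
  k * derive1 f x0 = s.
Proof.
move=> x0ab df supp; have /andP[ax xb] := x0ab.
pose g := k \*: f - s \*: id.
have dg y : y \in `]a, b[ -> derivable g y 1.
  by rewrite in_itv /= => /df /derivableP Df; exact: ex_derive.
have gmin y : y \in `]a, b[ -> g x0 <= g y.
  rewrite in_itv /= => /supp ley; rewrite /g !fctE.
  by change (k * f x0 - s * x0 <= k * f y - s * y); lra.
have Dg := derive1_at_min (ltW (lt_trans ax xb)) dg x0ab gmin.
have /derivableP Df := df _ x0ab.
have : 'D_1 g x0 = k *: 'D_1 f x0 - s *: 1 by apply: derive_val.
rewrite derive_val derive1E => /eqP; rewrite eq_sym subr_eq0 => /eqP.
by rewrite [s *: 1]mulr1.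
Qed.

Lemma convex_derive1_le {S f u w} : convex_on S f -> S u -> S w -> u < w ->
  derivable f u 1 -> derivable f w 1 -> derive1 f u <= derive1 f w.
Proof.
move=> cvx Su Sw uw du dw.
have := convex_tangent_line_le cvx Su Sw du.
have := convex_tangent_line_le cvx Sw Su dw.
rewrite /tangent_line => Hw Hu.
have : 0 <= (derive1 f w - derive1 f u) * (w - u) by lra.
by rewrite pmulr_lge0 ?subr_gt0 // subr_ge0.
Qed.

Lemma tangent_line_between {S f} p {u w} : convex_on S f -> S u -> S w ->
  derivable f u 1 -> derivable f w 1 -> (p <= u <= w) || (w <= u <= p) ->
  tangent_line f w p <= tangent_line f u p.
Proof.
move=> cvx Su Sw du dw pos.
have [-> //|uw] := eqVneq u w.
have := convex_tangent_line_le cvx Sw Su dw; rewrite /tangent_line => Hw.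
suff : (derive1 f w - derive1 f u) * (p - u) <= 0 by nra.
case/orP: pos => /andP[pu uw'].
- have ltuw : u < w by rewrite lt_neqAle uw.
  have := convex_derive1_le cvx Su Sw ltuw du dw; nra.
- have ltwu : w < u by rewrite lt_neqAle eq_sym uw.
  have := convex_derive1_le cvx Sw Su ltwu dw du; nra.
Qed.

End convex_tangent.

Section unit_interval.
Context {R : realType}.
Implicit Types (f g : R -> R) (G : probability R R) (mu k a b M Mf Mg : R).
Local Notation D := (@unit_itv R).

Lemma unit_itvE : D = [set` `]0, 1[%R] `|` ([set 0] `|` [set 1]).
Proof.
apply/seteqP; split => x /=.
  rewrite /unit_itv /= in_itv /= => /andP[x0 x1].
  have [->|xn0] := eqVneq x 0; first by right; left.
  have [->|xn1] := eqVneq x 1; first by right; right.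
  by left; rewrite lt_neqAle eq_sym xn0 x0 lt_neqAle xn1 x1.
rewrite in_itv /= /unit_itv /=; case=> [/andP[x0 x1]|[->|->]]; rewrite ?lexx ?ler01 //.
by rewrite !ltW.
Qed.

Lemma measurable_unit_itv : measurable D.
Proof. by rewrite unit_itvE; apply: measurableU => //; apply: measurableU. Qed.

Lemma measurable_fun_unit_itv {f} : (forall x, 0 < x < 1 -> derivable f x 1) ->
  measurable_fun D f.
Proof.
move=> df; rewrite unit_itvE; apply/measurable_funU => //.
  exact: measurableU.
split; last by apply/measurable_funU => //; split; exact: measurable_fun_set1.
apply: open_continuous_measurable_fun; first exact: interval_open.
move=> x; rewrite inE /= in_itv /= => /df /derivable1_diffP.
exact: differentiable_continuous.
Qed.

Lemma unit_itv_norm_le f B : (forall x, D x -> 0 <= f x) ->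
  (forall x, 0 < x < 1 -> f x <= B) -> forall x, D x -> `|f x| <= `|B| + f 0 + f 1.
Proof.
move=> f0 fB x Dx; rewrite ger0_norm ?f0 //.
have f00 : 0 <= f 0 by apply: f0; rewrite /unit_itv /= lexx ler01.
have f10 : 0 <= f 1 by apply: f0; rewrite /unit_itv /= lexx ler01.
have := ler_norm B; have := normr_ge0 B.
have [->|x0] := eqVneq x 0; first lra.
have [->|x1] := eqVneq x 1; first lra.
move: Dx => /andP[x0' x1'].
have /fB : 0 < x < 1 by rewrite !lt_neqAle eq_sym x0 x0' x1 x1'.
lra.
Qed.

Lemma integrable_unit_itv G {f M} : measurable_fun D f ->
  (forall x, D x -> `|f x| <= M) -> G.-integrable D (EFin \o f).
Proof.
move=> mf fM; apply: measurable_bounded_integrable => //.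
- exact: measurable_unit_itv.
- by rewrite (le_lt_trans (probability_le1 _ measurable_unit_itv)) // ltry.
exists M; split; first exact: num_real.
by move=> x Mx y Dy /=; apply: le_trans (fM _ Dy) _; exact: ltW.
Qed.

Lemma bayes_plausible_integral_le {G mu f g} k a b {Mf Mg} :
  bayes_plausible G mu -> measurable_fun D f -> measurable_fun D g ->
  (forall x, D x -> `|f x| <= Mf) -> (forall x, D x -> `|g x| <= Mg) ->
  (forall x, D x -> f x <= a + b * (x - mu) + k * g x) ->
  (\int[G]_(x in D) (f x)%:E - k%:E * \int[G]_(x in D) (g x)%:E <= a%:E)%E.
Proof.
move=> [GD Gmean] mf mg fM gM fle.
have mD := measurable_unit_itv.
have If := integrable_unit_itv G mf fM.
have Ig := integrable_unit_itv G mg gM.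
have Ix : G.-integrable D (EFin \o id).
  apply: (integrable_unit_itv G (M := 1)) => [|x /andP[x0 x1]].
    exact: measurable_id.
  by rewrite ger0_norm.
have Ic : G.-integrable D (EFin \o cst (a - b * mu)).
  exact: (integrable_unit_itv G _ (M := `|a - b * mu|)).
have := integrable_fin_num mD Ig; have := integrable_fin_num mD If.
rewrite /comp; set IG := (\int[G]_(x in D) (g x)%:E)%E.
set IF := (\int[G]_(x in D) (f x)%:E)%E.
have : (IF <= \int[G]_(x in D) (((a - b * mu)%:E + b%:E * x%:E) + k%:E * (g x)%:E))%E.
  apply: le_integral => //.
  - by apply: integrableD => //; [apply: integrableD => //|]; exact: integrableZl.
  - move=> x; rewrite inE => Dx; rewrite -!EFinM -!EFinD lee_fin.
    by have := fle x Dx; lra.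
rewrite integralD //; last 2 first.
- by apply: integrableD => //; exact: integrableZl.
- exact: integrableZl.
rewrite integralD //; last exact: integrableZl.
rewrite integralZl // integralZl // Gmean -/IG.
rewrite (_ : \int[G]_(x in D) _ = (a - b * mu)%:E * G D)%E; last first.
  exact: integral_cst.
rewrite GD mule1.
move: IG IF => [IG| |] [IF| |] //= + _ _.
by rewrite -!EFinM -!EFinD !lee_fin; lra.
Qed.

End unit_interval.

Section two_point.
Context d (T : measurableType d) (R : realType) (p : {i01 R}) (y z : T).

Definition two_point := measure_add
  (mscale (p%:num)%:nng (\d_y : {measure set T -> \bar R}))
  (mscale (1 - p%:num)%:nng (\d_z : {measure set T -> \bar R})).

HB.instance Definition _ := Measure.on two_point.

Lemma two_pointE A : two_point A = ((p%:num)%:E * \d_y A + (1 - p%:num)%:E * \d_z A)%E.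
Proof. by rewrite /two_point measure_addE. Qed.

Let two_pointT : two_point [set: T] = 1%E.
Proof. by rewrite two_pointE !diracT !mule1 -EFinD addrC subrK. Qed.

HB.instance Definition _ := @Measure_isProbability.Build _ _ R two_point two_pointT.

Lemma ge0_integral_two_point (D : set T) (f : T -> \bar R) : measurable D ->
  measurable_fun D f -> (forall x, D x -> (0 <= f x)%E) -> D y -> D z ->
  (\int[two_point]_(x in D) f x = (p%:num)%:E * f y + (1 - p%:num)%:E * f z)%E.
Proof.
move=> mD mf f0 Dy Dz.
rewrite ge0_integral_measure_add // !ge0_integral_mscale //.
by rewrite !integral_dirac // !diracE !mem_set // !mul1e.
Qed.

End two_point.
Arguments two_point {d T R} p y z.
Arguments ge0_integral_two_point {d T R p y z D} f.

Lemma two_point_bayes_plausible (R : realType) (p : {i01 R}) (y z mu : R) :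
  unit_itv y -> unit_itv z -> p%:num * y + (1 - p%:num) * z = mu ->
  bayes_plausible (two_point p y z) mu.
Proof.
move=> Dy Dz pmu; split.
  rewrite -[LHS]/(two_point p y z (@unit_itv R)) two_pointE !diracE !mem_set // !mule1.
  by rewrite -EFinD addrC subrK.
rewrite (ge0_integral_two_point (fun x => x%:E)) //.
- by rewrite -!EFinM -EFinD pmu.
- exact: measurable_unit_itv.
- by apply/measurable_EFinP; exact: measurable_id.
- by move=> x /andP[x0 _]; rewrite lee_fin.
Qed.

Section strategies.
Context {R : realType}.
Local Notation D := (@unit_itv R).

Definition strategy_payoff (v0 xL xH : R) (t : R -> state -> R)
    (pW pL pH : R -> R) (x : R) : R :=
  pW x * v0 + pL x * exp_transfer t xL x + pH x * exp_transfer t xH x.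

Lemma exp_transfer_shift (t : R -> state -> R) d x y :
  exp_transfer t d x = exp_transfer t d y + (t d th2 - t d th1) * (x - y).
Proof. by rewrite /exp_transfer; ring. Qed.

Lemma measurable_strategy_payoff v0 xL xH t pW pL pH : strategy pW pL pH ->
  measurable_fun D (strategy_payoff v0 xL xH t pW pL pH).
Proof.
move=> [mW [mL [mH _]]].
have me e : measurable_fun D (exp_transfer t e).
  by apply: measurable_funD; apply: measurable_funM => //; exact: measurable_funB.
by apply: measurable_funD; [apply: measurable_funD|]; apply: measurable_funM.
Qed.

Lemma strategy_payoff_bounds {v0 xL xH t pW pL pH x} :
  strategy pW pL pH -> 0 <= v0 ->
  (forall e s, (e = xL \/ e = xH) -> 0 <= t e s) -> D x ->
  0 <= strategy_payoff v0 xL xH t pW pL pH x <=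
  v0 + (t xL th1 + t xL th2) + (t xH th1 + t xH th2).
Proof.
move=> [_ [_ [_ hs]]] v00 tpos Dx.
have [w0 l0 h0 sum1] := hs x Dx.
have /andP[x0 x1] := Dx.
have et e : 0 <= t e th1 -> 0 <= t e th2 ->
    0 <= exp_transfer t e x <= t e th1 + t e th2.
  move=> ? ?; rewrite /exp_transfer; apply/andP; split; last by nra.
  by apply: addr_ge0; apply: mulr_ge0; lra.
have /andP[eL0 eL1] := et _ (tpos xL th1 (or_introl erefl)) (tpos xL th2 (or_introl erefl)).
have /andP[eH0 eH1] := et _ (tpos xH th1 (or_intror erefl)) (tpos xH th2 (or_intror erefl)).
rewrite /strategy_payoff; apply/andP; split; first by nra.
have : pW x * v0 <= v0 by nra.
have : pL x * exp_transfer t xL x <= t xL th1 + t xL th2 by nra.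
have : pH x * exp_transfer t xH x <= t xH th1 + t xH th2 by nra.
lra.
Qed.

Definition threshold (mu u v x : R) : R := if x < mu then u else v.

Lemma threshold_lt {mu} u v {x} : x < mu -> threshold mu u v x = u.
Proof. by rewrite /threshold => ->. Qed.

Lemma threshold_ge {mu} u v {x} : mu <= x -> threshold mu u v x = v.
Proof. by rewrite /threshold ltNge => ->. Qed.

Lemma measurable_threshold mu u v : measurable_fun D (threshold mu u v).
Proof.
apply: (measurable_funS measurableT) => //.
apply: measurable_fun_ifT => //.
exact: measurable_fun_ltr.
Qed.

Lemma threshold_strategy mu wL lL hL wH lH hH :
  [/\ 0 <= wL, 0 <= lL, 0 <= hL & wL + lL + hL = 1] ->
  [/\ 0 <= wH, 0 <= lH, 0 <= hH & wH + lH + hH = 1] ->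
  strategy (threshold mu wL wH) (threshold mu lL lH) (threshold mu hL hH).
Proof.
move=> below above; do 3 (split; first exact: measurable_threshold).
by move=> x _; rewrite /threshold; case: ifP.
Qed.

End strategies.

Lemma cost_convex {R : realType} {c : R -> R} {mu} :
  cost_assumptions c mu -> convex_on (@unit_itv R) c.
Proof.
move=> [_ [cvx _]] x y l Dx Dy l01.
have [<-|xy] := eqVneq x y; last exact/ltW/cvx.
by rewrite -!mulrDl !subrKC !mul1r.
Qed.

Section tangent_contract.
Context {R : realType} (c : R -> R) (kappa v0 mu : R).

Definition tangent_transfer (d x : R) : R :=
  v0 + kappa * (tangent_line c d x - tangent_line c mu x).

(* The states theta_1 and theta_2 are the degenerate posteriors 0 and 1. *)
Definition tangent_contract (d : R) (s : state) : R :=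
  tangent_transfer d (if s is th1 then 0 else 1).

Lemma exp_transfer_tangent_contract d x :
  exp_transfer tangent_contract d x = tangent_transfer d x.
Proof.
by rewrite /exp_transfer /tangent_contract /tangent_transfer /tangent_line; ring.
Qed.

End tangent_contract.

Section proposition4.
Context {R : realType} {c : R -> R} {kappa v0 mu xL xH : R}.
Hypotheses (k0 : 0 < kappa) (v00 : 0 <= v0) (ca : cost_assumptions c mu).
Hypotheses (xL0 : 0 < xL) (xLmu : xL < mu) (muxH : mu < xH) (xH1 : xH < 1).
Local Notation D := (@unit_itv R).
Local Notation tangent_transfer := (tangent_transfer c kappa v0 mu).
Local Notation tangent_contract := (tangent_contract c kappa v0 mu).

Let c0 (x : R) : D x -> 0 <= c x. Proof. by case: ca => + _; apply. Qed.
Let dc {x : R} : 0 < x < 1 -> derivable c x 1.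
Proof. by case: ca => _ [_ [/(_ x) dcx _]] /dcx []. Qed.
Let cmu : c mu = 0. Proof. by case: ca => _ [_ [_ []]]. Qed.
Let cvx : convex_on D c := cost_convex ca.
Let mc : measurable_fun D c := measurable_fun_unit_itv (@dc).
Let xLxH : xL < xH. Proof. exact: lt_trans xLmu muxH. Qed.
Let xHxL : xH - xL != 0. Proof. by rewrite subr_eq0 gt_eqF. Qed.
Let mu01 : 0 < mu < 1. Proof. by rewrite (lt_trans xL0 xLmu) (lt_trans muxH xH1). Qed.
Let xL01 : 0 < xL < 1. Proof. by rewrite xL0 (lt_trans xLxH xH1). Qed.
Let xH01 : 0 < xH < 1. Proof. by rewrite xH1 (lt_trans xL0 xLxH). Qed.
Let inD {x : R} : 0 < x < 1 -> D x. Proof. by case/andP=> x0 x1; rewrite /unit_itv /= !ltW. Qed.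

Lemma tangent_contract_ge0_eta :
  (forall d s, d = xL \/ d = xH -> 0 <= tangent_contract d s) <->
  eta_max c mu xL xH <= v0 / kappa.
Proof.
have eta1E : tangent_transfer xH 0 = v0 - kappa * eta1 c mu xH.
  by rewrite /tangent_transfer /tangent_line /eta1 cmu; ring.
have eta2E : tangent_transfer xL 1 = v0 - kappa * eta2 c mu xL.
  by rewrite /tangent_transfer /tangent_line /eta2 cmu; ring.
have transfer_le p u w : (p <= u <= w) || (w <= u <= p) ->
    0 < u < 1 -> 0 < w < 1 -> tangent_transfer w p <= tangent_transfer u p.
  move=> between u01 w01.
  have := tangent_line_between p cvx (inD u01) (inD w01) (dc u01) (dc w01) between.
  by rewrite /tangent_transfer => /(ler_wpM2l (ltW k0)); lra.
have le_at0 : tangent_transfer xH 0 <= tangent_transfer xL 0.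
  by apply: transfer_le => //; rewrite (ltW xL0) (ltW xLxH).
have le_at1 : tangent_transfer xL 1 <= tangent_transfer xH 1.
  by apply: transfer_le => //; rewrite (ltW xH1) (ltW xLxH) orbT.
rewrite /eta_max ge_max !ler_pdivlMr // [_ * kappa]mulrC [eta2 _ _ _ * _]mulrC.
split=> [t0 | /andP[e1 e2] d s [->|->]]; last 2 first.
- by case: s; rewrite /tangent_contract /=; lra.
- by case: s; rewrite /tangent_contract /=; lra.
have := t0 xH th1 (or_intror erefl); have := t0 xL th2 (or_introl erefl).
by rewrite /tangent_contract /=; lra.
Qed.

Lemma strategy_payoff_tangent_le {pW pL pH x} : strategy pW pL pH -> D x ->
  strategy_payoff v0 xL xH tangent_contract pW pL pH x <=
  v0 + kappa * (c x - tangent_line c mu x).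
Proof.
move=> [_ [_ [_ st]]] Dx; have [w0 l0 h0 sum1] := st x Dx.
set L := v0 + _.
have tangent_le d : 0 < d < 1 -> tangent_transfer d x <= L.
  move=> d01; have := convex_tangent_line_le cvx (inD d01) Dx (dc d01).
  by move=> /(ler_wpM2l (ltW k0)); rewrite /L /tangent_transfer; lra.
have walk_le : v0 <= L.
  have /(ler_wpM2l (ltW k0)) := convex_tangent_line_le cvx (inD mu01) Dx (dc mu01).
  by rewrite /L; lra.
rewrite /strategy_payoff !exp_transfer_tangent_contract.
have := ler_wpM2l w0 walk_le.
have := ler_wpM2l l0 (tangent_le _ xL01).
have := ler_wpM2l h0 (tangent_le _ xH01).
have : pW x * L + pL x * L + pH x * L = L by rewrite -!mulrDl sum1 mul1r.
lra.
Qed.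

Lemma tangent_contract_efficient :
  (forall d s, d = xL \/ d = xH -> 0 <= tangent_contract d s) ->
  implements c kappa v0 xL xH mu tangent_contract /\
  principal_cost xL xH mu tangent_contract = first_best c kappa v0 xL xH mu.
Proof.
move=> t0.
have truthful : truthful_payoff c kappa xL xH mu tangent_contract = v0.
  rewrite /truthful_payoff !exp_transfer_tangent_contract /tangent_transfer.
  by rewrite /tangent_line cmu /wL /wH; field.
split; last first.
  rewrite /principal_cost /first_best !exp_transfer_tangent_contract.
  by rewrite /tangent_transfer /tangent_line cmu /wL /wH; field.
split; first exact: t0.
split; first by rewrite truthful.
move=> G pW pL pH bp st; rewrite truthful /dev_payoff.
have [B cB] : exists B, forall x, D x -> `|c x| <= B.
  case: ca => _ [_ [_ [[B cB] _]]].
  by exists (`|B| + c 0 + c 1); exact: unit_itv_norm_le.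
apply: (bayes_plausible_integral_le kappa v0 (- (kappa * derive1 c mu)) bp).
- exact: measurable_strategy_payoff.
- exact: mc.
- move=> x Dx; have /andP[p0 p1] := strategy_payoff_bounds st v00 t0 Dx.
  by rewrite ger0_norm //; exact: p1.
- exact: cB.
move=> x Dx; apply: (le_trans (strategy_payoff_tangent_le st Dx)).
by rewrite /tangent_line cmu; lra.
Qed.

Section efficient_contract.
Context {t : R -> state -> R}.
Hypotheses (impl : implements c kappa v0 xL xH mu t)
  (cost : principal_cost xL xH mu t = first_best c kappa v0 xL xH mu).

Let t0 : forall d s, d = xL \/ d = xH -> 0 <= t d s. Proof. by case: impl. Qed.

Let net pW pL pH x := strategy_payoff v0 xL xH t pW pL pH x - kappa * c x.

Let truthful : truthful_payoff c kappa xL xH mu t = v0.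
Proof. by move: cost; rewrite /truthful_payoff /principal_cost /first_best; lra. Qed.

Lemma dev_payoff_two_point (p : {i01 R}) y z pW pL pH :
  strategy pW pL pH -> D y -> D z ->
  dev_payoff c kappa v0 xL xH t (two_point p y z) pW pL pH =
  (p%:num * net pW pL pH y + (1 - p%:num) * net pW pL pH z)%:E.
Proof.
move=> st Dy Dz; rewrite /dev_payoff /net.
have mD := @measurable_unit_itv R.
have mP : measurable_fun D (fun x => (strategy_payoff v0 xL xH t pW pL pH x)%:E).
  by apply/measurable_EFinP; exact: measurable_strategy_payoff.
have P0 x : D x -> (0 <= (strategy_payoff v0 xL xH t pW pL pH x)%:E)%E.
  by move=> Dx; rewrite lee_fin; case/andP: (strategy_payoff_bounds st v00 t0 Dx).
have mcE : measurable_fun D (fun x => (c x)%:E) by exact/measurable_EFinP.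
have c0E x : D x -> (0 <= (c x)%:E)%E by move=> Dx; rewrite lee_fin; exact: c0.
rewrite (ge0_integral_two_point (fun x => (strategy_payoff _ _ _ _ _ _ _ x)%:E)) //.
rewrite (ge0_integral_two_point (fun x => (c x)%:E)) //.
by rewrite -!EFinM -!EFinD -?EFinM -?EFinB; congr (_%:E); ring.
Qed.

Lemma efficient_two_point_deviation {pW pL pH y z} : strategy pW pL pH ->
  D y -> D z -> y < mu -> mu < z ->
  (z - mu) * net pW pL pH y + (mu - y) * net pW pL pH z <= (z - y) * v0.
Proof.
move=> st Dy Dz ymu muz.
have zy : 0 < z - y by lra.
have p0 : 0 <= (z - mu) / (z - y) by apply: divr_ge0; lra.
have p1 : (z - mu) / (z - y) <= 1 by rewrite ler_pdivrMr // mul1r; lra.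
have bp : bayes_plausible (two_point (Itv01 p0 p1) y z) mu.
  by apply: two_point_bayes_plausible => //=; field; rewrite gt_eqF.
have := impl.2.2 _ _ _ _ bp st.
rewrite dev_payoff_two_point // truthful lee_fin /= => /(ler_wpM2l (ltW zy)).
set A := net _ _ _ y; set B := net _ _ _ z.
suff -> : (z - y) * ((z - mu) / (z - y) * A + (1 - (z - mu) / (z - y)) * B) =
          (z - mu) * A + (mu - y) * B by [].
by field; rewrite gt_eqF.
Qed.

Let PL := exp_transfer t xL xL - kappa * c xL.
Let PH := exp_transfer t xH xH - kappa * c xH.
Let slope := (PH - PL) / (xH - xL).
Let line x := v0 + slope * (x - mu).

Let PL_line : PL = line xL.
Proof. by rewrite /line /slope -truthful /truthful_payoff -/PL -/PH /wL /wH; field. Qed.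

Let PH_line : PH = line xH.
Proof. by rewrite /line /slope -truthful /truthful_payoff -/PL -/PH /wL /wH; field. Qed.

(* A line through [(mu, v0)] averages to [v0] under every two-point
   distribution with mean [mu]; so no deviation can rise above it on one side
   of [mu] while touching it on the other. *)
Lemma efficient_below_line {pW pL pH y z} : strategy pW pL pH ->
  D y -> D z -> y < mu -> mu < z ->
  (net pW pL pH y = line y -> net pW pL pH z <= line z) /\
  (net pW pL pH z = line z -> net pW pL pH y <= line y).
Proof.
move=> st Dy Dz ymu muz.
have := efficient_two_point_deviation st Dy Dz ymu muz.
have -> : (z - y) * v0 = (z - mu) * line y + (mu - y) * line z by rewrite /line; ring.
move=> dev; split=> [Ey | Ez]; move: dev; rewrite ?Ey ?Ez.
- by rewrite lerD2l ler_pM2l // subr_gt0.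
- by rewrite lerD2r ler_pM2l // subr_gt0.
Qed.

Let walk_or_high : strategy (threshold mu 1 0) (threshold mu 0 0) (threshold mu 0 1).
Proof. by apply: threshold_strategy; split; rewrite ?ler01 ?lexx //; lra. Qed.

Let low_or_walk : strategy (threshold mu 0 1) (threshold mu 1 0) (threshold mu 0 0).
Proof. by apply: threshold_strategy; split; rewrite ?ler01 ?lexx //; lra. Qed.

Let low_or_high : strategy (threshold mu 0 0) (threshold mu 1 0) (threshold mu 0 1).
Proof. by apply: threshold_strategy; split; rewrite ?ler01 ?lexx //; lra. Qed.

Lemma efficient_slope_mu : kappa * derive1 c mu = - slope.
Proof.
apply: (supporting_line_slope mu01 (@dc)) => y y01.
rewrite cmu mulr0 add0r.
have [ymu|muy] := ltP y mu.
  have [_] := efficient_below_line walk_or_high (inD y01) (inD xH01) ymu muxH.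
  rewrite /net /strategy_payoff !(threshold_lt _ _ ymu) !(threshold_ge _ _ (ltW muxH)).
  rewrite !mul0r !mul1r !add0r !addr0 => /(_ PH_line).
  by rewrite /line; lra.
have [<-|muy'] := eqVneq mu y; first by rewrite subrr mulr0 cmu mulr0.
have {muy'} muy : mu < y by rewrite lt_neqAle muy' muy.
have [below _] := efficient_below_line low_or_walk (inD xL01) (inD y01) xLmu muy.
move: below; rewrite /net /strategy_payoff !(threshold_lt _ _ xLmu) !(threshold_ge _ _ (ltW muy)).
rewrite !mul0r !mul1r !add0r !addr0 => /(_ PL_line).
by rewrite /line; lra.
Qed.

Lemma efficient_slope_xL : kappa * derive1 c xL = t xL th2 - t xL th1 - slope.
Proof.
have xL0mu : 0 < xL < mu by rewrite xL0 xLmu.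
apply: (supporting_line_slope xL0mu) => [y /andP[y0 ymu] | y /andP[y0 ymu]].
  by apply: dc; rewrite y0 (lt_trans ymu (lt_trans muxH xH1)).
have y01 : 0 < y < 1 by rewrite y0 (lt_trans ymu (lt_trans muxH xH1)).
have [_] := efficient_below_line low_or_high (inD y01) (inD xH01) ymu muxH.
rewrite /net /strategy_payoff !(threshold_lt _ _ ymu) !(threshold_ge _ _ (ltW muxH)).
rewrite !mul0r !mul1r !add0r !addr0 => /(_ PH_line).
rewrite (exp_transfer_shift t xL y xL).
by move: PL_line; rewrite /PL /line; lra.
Qed.

Lemma efficient_slope_xH : kappa * derive1 c xH = t xH th2 - t xH th1 - slope.
Proof.
have xHmu1 : mu < xH < 1 by rewrite muxH xH1.
apply: (supporting_line_slope xHmu1) => [y /andP[muy y1] | y /andP[muy y1]].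
  by apply: dc; rewrite y1 (lt_trans (lt_trans xL0 xLmu) muy).
have y01 : 0 < y < 1 by rewrite y1 (lt_trans (lt_trans xL0 xLmu) muy).
have [below _] := efficient_below_line low_or_high (inD xL01) (inD y01) xLmu muy.
move: below; rewrite /net /strategy_payoff !(threshold_lt _ _ xLmu) !(threshold_ge _ _ (ltW muy)).
rewrite !mul0r !mul1r !add0r !addr0 => /(_ PL_line).
rewrite (exp_transfer_shift t xH y xH).
by move: PH_line; rewrite /PH /line; lra.
Qed.

Lemma efficient_exp_transfer d x : d = xL \/ d = xH ->
  exp_transfer t d x = tangent_transfer d x.
Proof.
have tangentE : tangent_transfer d x =
    v0 + kappa * c d + kappa * derive1 c d * (x - d) - kappa * derive1 c mu * (x - mu).
  by rewrite /tangent_transfer /tangent_line cmu; ring.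
rewrite tangentE efficient_slope_mu (exp_transfer_shift t d x d).
case=> ->; [rewrite efficient_slope_xL; move: PL_line | rewrite efficient_slope_xH; move: PH_line].
all: by rewrite /PL /PH /line; lra.
Qed.

Lemma efficient_contract_tangent d s : d = xL \/ d = xH -> t d s = tangent_contract d s.
Proof.
move=> dM; rewrite /tangent_contract -efficient_exp_transfer // /exp_transfer.
by case: s; ring.
Qed.

End efficient_contract.

End proposition4.

Theorem proposition4 (R : realType) (c : R -> R) (kappa v0 mu xL xH : R) :
  0 < kappa -> 0 <= v0 -> 0 < mu < 1 ->
  cost_assumptions c mu ->
  0 < xL -> xL < mu -> mu < xH -> xH < 1 ->
  implements_efficiently c kappa v0 xL xH mu <-> eta_max c mu xL xH <= v0 / kappa.
Proof.
move=> k0 v00 _ ca xL0 xLmu muxH xH1.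
rewrite -(tangent_contract_ge0_eta k0 ca xL0 xLmu muxH xH1).
split=> [[t [impl cost]] d s dM | t0].
  rewrite -(efficient_contract_tangent v00 ca xL0 xLmu muxH xH1 impl cost _ _ dM).
  by case: impl => + _; apply.
exists (tangent_contract c kappa v0 mu).
exact: tangent_contract_efficient.
Qed.
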